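(* Let $n\ge1$ and let $f$ be an automorphism of the additive group $\mathbb{Z}^n$. If $f$ has cycles of lengths $\alpha$ and $\beta$, each different from the zero cycle $\{0\}$, then $f$ has a cycle of length $\mathrm{lcm}(\alpha,\beta)$.
   Context: For a bijection $f$ of a set, a cycle is a finite sequence $a_1,\dots,a_m$ of distinct elements with $f(a_j)=a_{j+1}$ for $j<m$ and $f(a_m)=a_1$; its length is $m$. The zero cycle of an automorphism of $\mathbb{Z}^n$ is the fixed point $0$. *)

(* Z^n is modelled as 'rV[int]_n. *)
From mathcomp Require Import all_boot all_order all_algebra.
Set Implicit Arguments. Unset Strict Implicit. Unset Printing Implicit Defensive.
Import GRing.Theory.
Local Open Scope ring_scope.

Definition is_Zn_aut (n : nat) (f : 'rV[int]_n -> 'rV[int]_n) : Prop :=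
  (forall x y, f (x + y) = f x + f y) /\ bijective f.

(* s = [:: a_1; ...; a_m] is a cycle of f: nonempty, distinct elements,
   f a_j = a_{j+1} for j < m and f a_m = a_1 (MathComp's fcycle). *)
Definition is_cycle (T : eqType) (f : T -> T) (s : seq T) : bool :=
  [&& (0 < size s)%N, uniq s & fcycle f s].

(** If [x] and [y] have exact periods [a] and [b] under the additive map [f],
    then [f^m (x + k y) = x + k y] iff [f^m x - x = k (y - f^m y)]. Taking [k]
    larger than the l1-norms of all [f^m x - x] with [m < lcm a b], this forces
    [f^m y = y] and then [f^m x = x], i.e. [lcm a b] divides [m]. So [x + k y]
    has exact period [lcm a b], and its orbit is a cycle of that length. *)

From mathcomp Require Import all_boot all_order all_algebra.
From mathcomp Require Import zify.

Set Implicit Arguments.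
Unset Strict Implicit.
Unset Printing Implicit Defensive.

Local Open Scope ring_scope.
Import GRing.Theory.

Section ExactPeriod.
Variables (T : eqType) (f : T -> T).

Definition exact_period (x : T) (a : nat) : Prop :=
  (0 < a)%N /\ forall m, (iter m f x == x) = (a %| m)%N.

Lemma iter_modn x a :
  iter a f x = x -> forall m, iter m f x = iter (m %% a) f x.
Proof.
by move=> fax m; rewrite {1}(divn_eq m a) addnC iterD iterM (iter_fix _ fax).
Qed.

Lemma exact_periodP x a :
  (0 < a)%N -> iter a f x = x -> (forall m, (0 < m < a)%N -> iter m f x != x) ->
  exact_period x a.
Proof.
move=> a_gt0 fax aperiodic; split=> // m.
rewrite (iter_modn fax) /dvdn.
have [->|r_gt0] := posnP (m %% a); first exact: eqxx.
by apply/negbTE/aperiodic; rewrite r_gt0 ltn_pmod.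
Qed.

Lemma cycle_exact_period s : is_cycle f s -> exists x, exact_period x (size s).
Proof.
case/and3P; case: s => [|x p] // _ uniq_s.
rewrite /= rcons_path => /andP[/fpathP[k p_def] /eqP last_x]; subst p.
exists x; rewrite -/(traject f x k.+1) size_traject; apply: exact_periodP => //.
  by rewrite iterS -last_traject.
move=> m /andP[m_gt0 m_lt].
rewrite -(nth_traject f m_lt x) -[x in _ != x]/(nth x (traject f x k.+1) 0).
by rewrite (nth_uniq x) ?size_traject // -lt0n.
Qed.

Lemma exact_period_cycle x a : exact_period x a -> is_cycle f (traject f x a).
Proof.
case: a => [[]//|a] [_ period_x]; apply/and3P; split.
- by rewrite size_traject.
- apply/(uniqP x) => i j; rewrite !inE size_traject => lt_i lt_j.
  rewrite !nth_traject //.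
  wlog le_ij : i j lt_i lt_j / (i <= j)%N => [wlog_ij|] eq_ij.
    by case: (leqP i j) => [|/ltnW] le_ij; [|apply/esym]; apply: wlog_ij.
  apply/eqP; rewrite eqn_leq le_ij leqNgt; apply/negP => lt_ij.
  (* Apply [f^(a+1-j)] to both sides of [f^i x = f^j x]. *)
  have : iter (a.+1 - j + i) f x == x.
    by rewrite iterD eq_ij -iterD subnK ?period_x // ltnW.
  rewrite period_x => /dvdn_leq; lia.
- rewrite trajectS /= rcons_path fpath_traject /= last_traject -iterS.
  by rewrite period_x.
Qed.

End ExactPeriod.

Section AdditiveIterates.
Variables (V : zmodType) (f : V -> V).
Hypothesis f_add : {morph f : u v / u + v}.

Lemma iter_morphD m : {morph iter m f : u v / u + v}.
Proof. by elim: m => [|m IHm] u v //=; rewrite IHm f_add. Qed.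

Lemma iter_mulrn m u k : iter m f (u *+ k) = iter m f u *+ k.
Proof.
elim: k => [|k IHk]; last by rewrite !mulrS iter_morphD IHk.
have f0 : f 0 = 0 by apply/(addrI (f 0)); rewrite -f_add !addr0.
by rewrite !mulr0n iter_fix.
Qed.

Lemma exact_period_add_mulrn x y a b k :
  exact_period f x a -> exact_period f y b ->
  (forall m, (m < lcmn a b)%N ->
     iter m f x - x = (y - iter m f y) *+ k -> iter m f y = y) ->
  exact_period f (x + y *+ k) (lcmn a b).
Proof.
move=> [a_gt0 period_x] [b_gt0 period_y] k_separates.
apply: exact_periodP; first by rewrite lcmn_gt0 a_gt0.
  have /eqP fLx : iter (lcmn a b) f x == x by rewrite period_x dvdn_lcml.
  have /eqP fLy : iter (lcmn a b) f y == y by rewrite period_y dvdn_lcmr.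
  by rewrite iter_morphD iter_mulrn fLx fLy.
move=> m /andP[m_gt0 m_lt]; apply/eqP; rewrite iter_morphD iter_mulrn => eq_z.
have fmy : iter m f y = y.
  apply: k_separates m_lt _.
  rewrite mulrnBl -(addrK (iter m f y *+ k) (iter m f x)) eq_z.
  by rewrite addrAC (addrC x) addrK.
move: eq_z; rewrite fmy => /addIr /eqP fmx.
have : (lcmn a b %| m)%N by rewrite dvdn_lcm -period_x -period_y fmx fmy eqxx.
by move/dvdn_leq => /(_ m_gt0); rewrite leqNgt m_lt.
Qed.

End AdditiveIterates.

Section IntegerRows.
Variable n : nat.

Definition l1norm (v : 'rV[int]_n) : nat := \sum_i `|v ord0 i|%N.

Lemma l1norm_mulrn v k : l1norm (v *+ k) = (l1norm v * k)%N.
Proof.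
rewrite /l1norm big_distrl; apply: eq_bigr => i _.
by rewrite mulmxnE -mulr_natr abszM natz.
Qed.

Lemma l1norm_eq0 v : (l1norm v == 0)%N = (v == 0).
Proof.
rewrite /l1norm sum_nat_eq0; apply/forall_inP/eqP => [v0|-> i _].
  by apply/rowP => i; rewrite mxE; apply/eqP; rewrite -absz_eq0; apply: v0.
by rewrite mxE.
Qed.

Lemma exists_mulrn_not_multiple (c : nat -> 'rV[int]_n) (L : nat) :
  exists k, forall m d, (m < L)%N -> c m = d *+ k -> d = 0.
Proof.
set B := (\sum_(j < L) l1norm (c j))%N; exists B.+1 => m d m_lt cmE.
have le_cm : (l1norm (c m) <= B)%N.
  by rewrite /B (bigD1 (Ordinal m_lt)) //= leq_addr.
apply/eqP; rewrite -l1norm_eq0 -leqn0; apply: contraLR le_cm.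
rewrite -!ltnNge => d_gt0.
by rewrite cmE l1norm_mulrn leq_pmull.
Qed.

End IntegerRows.

Theorem theorem3p8 (n : nat) (f : 'rV[int]_n -> 'rV[int]_n) (alpha beta : nat) :
  (1 <= n)%N ->
  is_Zn_aut f ->
  (exists s : seq 'rV[int]_n, [/\ is_cycle f s, size s = alpha & s != [:: 0]]) ->
  (exists t : seq 'rV[int]_n, [/\ is_cycle f t, size t = beta & t != [:: 0]]) ->
  exists u : seq 'rV[int]_n, is_cycle f u /\ size u = lcmn alpha beta.
Proof.
move=> _ [f_add _] [s [cycle_s <- _]] [t [cycle_t <- _]].
have [x period_x] := cycle_exact_period cycle_s.
have [y period_y] := cycle_exact_period cycle_t.
set L := lcmn (size s) (size t).
have [k k_separates] := exists_mulrn_not_multiple (fun m => iter m f x - x) L.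
exists (traject f (x + y *+ k) L); split; last exact: size_traject.
apply/exact_period_cycle/exact_period_add_mulrn => // m m_lt.
by move=> /(k_separates m _ m_lt) /subr0_eq.
Qed.
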